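(* In a public goods economy (as in the context), at any outcome $\mathbf{a}$ with $\mathbf{0}<\mathbf{a}<\mathbf{1}$, exactly one of the following three conditions holds: (1) there exist directions $\mathbf{v}_{up}>\mathbf{0}$, $\mathbf{v}_{down}<\mathbf{0}$ such that $\mathbf{d}_{\mathbf{v}_{up}}\mathbf{u}(\mathbf{a})>\mathbf{0}$ and $\mathbf{d}_{\mathbf{v}_{down}}\mathbf{u}(\mathbf{a})<\mathbf{0}$; (2) there exist directions $\mathbf{v}_{up}>\mathbf{0}$, $\mathbf{v}_{down}<\mathbf{0}$ such that $\mathbf{d}_{\mathbf{v}_{up}}\mathbf{u}(\mathbf{a})\le\mathbf{0}$ and $\mathbf{d}_{\mathbf{v}_{down}}\mathbf{u}(\mathbf{a})\le\mathbf{0}$; (3) there exist directions $\mathbf{v}_{up}>\mathbf{0}$, $\mathbf{v}_{down}<\mathbf{0}$ such that $\mathbf{d}_{\mathbf{v}_{up}}\mathbf{u}(\mathbf{a})<\mathbf{0}$ and $\mathbf{d}_{\mathbf{v}_{down}}\mathbf{u}(\mathbf{a})>\mathbf{0}$.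
   Context: Agents $N=\{1,\dots,n\}$; outcomes are vectors in $[0,1]^n$. Vector orderings: $\mathbf{x}\ge\mathbf{y}$ (resp. $\le$) means $x_i\ge y_i$ (resp. $\le$) for all $i$; $\mathbf{x}>\mathbf{y}$ (resp. $<$) means strict inequality in every coordinate; $\mathbf{x}\gneq\mathbf{y}$ means $\mathbf{x}\ge\mathbf{y}$ and $x_j>y_j$ for some $j$. $\mathbf{0},\mathbf{1}$ are the all-zeros and all-ones vectors. The utility function $\mathbf{u}:[0,1]^n\to[0,1]^n$ is continuous, concave, and has positive externalities: whenever $\mathbf{a}\gneq\mathbf{a}'$ and $a_i=a'_i$, then $u_i(\mathbf{a})>u_i(\mathbf{a}')$. For a direction $\mathbf{v}\in\mathbb{R}^n$, $\mathbf{d}_{\mathbf{v}}\mathbf{u}(\mathbf{a}):=\lim_{\lambda\to0^+}\frac{\mathbf{u}(\mathbf{a}+\lambda\mathbf{v})-\mathbf{u}(\mathbf{a})}{\lambda}$ is the one-sided directional derivative (a vector in $\mathbb{R}^n$). *)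

From HB Require Import structures.
From mathcomp Require Import all_boot all_order all_algebra.
From mathcomp Require Import all_classical all_reals all_analysis.
Set Implicit Arguments. Unset Strict Implicit. Unset Printing Implicit Defensive.
Import Order.TTheory GRing.Theory Num.Theory.
Import numFieldNormedType.Exports.
Local Open Scope classical_set_scope.
Local Open Scope ring_scope.

Section Defs.
Context {R : realType} {n : nat}.
Implicit Types (x y a v d : 'rV[R]_n).

Definition vle x y := forall i : 'I_n, x ord0 i <= y ord0 i.
Definition vlt x y := forall i : 'I_n, x ord0 i < y ord0 i.
Definition vlneq x y := vle y x /\ exists j : 'I_n, y ord0 j < x ord0 j. (* x gneq y *)

Definition cube : set 'rV[R]_n := [set x | vle 0 x /\ vle x (const_mx 1)].

Definition utility (u : 'rV[R]_n -> 'rV[R]_n) : Prop :=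
  [/\ (forall x, cube x -> cube (u x)),
      {within cube, continuous u},
      (forall x y (t : R), cube x -> cube y -> 0 <= t <= 1 ->
         forall i : 'I_n,
           t * u x ord0 i + (1 - t) * u y ord0 i
             <= u (t *: x + (1 - t) *: y) ord0 i) &
      (* positive externalities *)
      (forall x y, cube x -> cube y -> vlneq x y ->
         forall i : 'I_n, x ord0 i = y ord0 i -> u y ord0 i < u x ord0 i)].

Definition dirderiv_is (u : 'rV[R]_n -> 'rV[R]_n) a v d : Prop :=
  (fun l : R => l^-1 *: (u (a + l *: v) - u a)) @ 0^'+ --> d.
End Defs.

(* Concavity makes the difference quotients of u at the interior point a
   monotone in the step, so every one-sided derivative D v := d_v u(a) exists.
   D is positively homogeneous, Lipschitz and superadditive (so D(-v) <= -D v),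
   and positive externalities make it strictly increasing in every off-diagonal
   coordinate direction.  For such a map a Collatz--Wielandt argument on the
   simplex yields a positive eigenvector, D v = r v with v > 0, and likewise for
   v |-> -D(-v), with eigenvalue s.  If r > 0 condition (1) holds along (v, -v),
   if s < 0 condition (3) holds along (w, -w), and otherwise condition (2)
   holds.  Exclusivity comes from comparing two positive directions: scaling w
   so that t w >= v with equality in coordinate i gives (D v)_i <= t (D w)_i. *)

From HB Require Import structures.
From mathcomp Require Import all_boot all_order all_algebra.
From mathcomp Require Import all_classical all_reals all_analysis.
From mathcomp Require Import ring lra.
Import Order.TTheory GRing.Theory Num.Theory.
Import numFieldNormedType.Exports.
Local Open Scope classical_set_scope.
Local Open Scope ring_scope.
Set Implicit Arguments. Unset Strict Implicit. Unset Printing Implicit Defensive.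

Lemma finite_pos_lb {R : realType} (I : finType) (x : I -> R) :
  (forall i, 0 < x i) -> exists2 e, 0 < e & forall i, e <= x i.
Proof.
move=> x_gt0; exists (\big[Order.min/1]_i x i); last by move=> i; exact: bigmin_le.
by apply: lt_bigmin => // i _; exact: x_gt0.
Qed.

Lemma lipschitz_continuous {R : realType} (V W : normedModType R) (f : V -> W) (M : R) :
  (forall x y, `|f x - f y| <= M * `|x - y|) -> continuous f.
Proof.
move=> fL x; apply/cvgrPdist_lt => e e0.
have M1 : 0 < `|M| + 1 by rewrite ltr_wpDl.
near=> y; apply: le_lt_trans (fL x y) _.
apply: (@le_lt_trans _ _ ((`|M| + 1) * `|x - y|)).
  by apply: ler_wpM2r => //; rewrite (le_trans (ler_norm M)) // lerDl.
rewrite -ltr_pdivlMl //; near: y.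
apply: cvgr_dist_lt; first exact: cvg_id.
by rewrite mulr_gt0 ?invr_gt0.
Unshelve. all: by end_near.
Qed.

Lemma closed_forall_ge0 {R : realType} (T : topologicalType) (I : Type) (g : I -> T -> R) :
  (forall i, continuous (g i)) -> closed [set x | forall i, 0 <= g i x].
Proof.
move=> gc; have -> : [set x | forall i, 0 <= g i x] =
    \bigcap_(i in setT) (g i @^-1` [set y | 0 <= y]).
  by apply/seteqP; split => [x gx i _ | x gx i] //; exact: gx.
apply: closed_bigI => i _; apply: preimage_closed; last exact: closed_ge.
by move=> x _; exact: gc.
Qed.

Section RowVectors.
Context {R : realType} {n : nat}.
Implicit Types (v w : 'rV[R]_n).

Lemma normr_coord_le v i : `|v ord0 i| <= `|v|.
Proof.
rewrite [leRHS]/Num.Def.normr /= mx_normrE; apply/bigmax_geP; right => /=.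
by exists (ord0, i).
Qed.

Lemma normr_row_le v (c : R) : 0 <= c -> (forall i, `|v ord0 i| <= c) -> `|v| <= c.
Proof.
move=> c0 vc; rewrite [leLHS]/Num.Def.normr /= mx_normrE; apply/bigmax_leP.
by split=> // -[x j] _ /=; rewrite (ord1 x).
Qed.

Lemma normr_delta (k : 'I_n) (t : R) : 0 <= t -> `|t *: delta_mx 0 k : 'rV[R]_n| = t.
Proof.
move=> t0; apply/eqP; rewrite eq_le; apply/andP; split.
  apply: normr_row_le => // j; rewrite !mxE eqxx /=.
  by case: (j == k); rewrite ?mulr1 ?mulr0 ?normr0 // ger0_norm.
by apply: le_trans (normr_coord_le _ k); rewrite !mxE !eqxx mulr1 ger0_norm.
Qed.

Lemma vlt0P v : vlt 0 v <-> forall i, 0 < v ord0 i.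
Proof. by split=> h i; have := h i; rewrite mxE. Qed.

Lemma vlt0N v : vlt v 0 -> vlt 0 (- v).
Proof. by move=> h i; have := h i; rewrite !mxE oppr_gt0. Qed.

Lemma sum_coord_lipschitz v w :
  `|\sum_j v ord0 j - \sum_j w ord0 j| <= n%:R * `|v - w|.
Proof.
rewrite -sumrB; apply: le_trans (ler_norm_sum _ _ _) _.
rewrite mulr_natl -[in X in _ *+ X](card_ord n) -sumr_const; apply: ler_sum => j _.
by have := normr_coord_le (v - w) j; rewrite !mxE.
Qed.

Lemma coord_le_sum v j : (forall l, 0 <= v ord0 l) -> v ord0 j <= \sum_l v ord0 l.
Proof. by move=> v_ge0; rewrite (bigD1 j) //= lerDl sumr_ge0. Qed.

Definition simplex : set 'rV[R]_n :=
  [set v | (forall j, 0 <= v ord0 j) /\ \sum_j v ord0 j = 1].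

Lemma simplex_coord_le1 v j : simplex v -> v ord0 j <= 1.
Proof. by case=> v_ge0 <-; exact: coord_le_sum. Qed.

Lemma simplex_norm_le1 v : simplex v -> `|v| <= 1.
Proof.
move=> v_simplex; apply: normr_row_le => // j; have [v_ge0 _] := v_simplex.
by rewrite ger0_norm // simplex_coord_le1.
Qed.

Lemma simplex_coord_ge v : (0 < n)%N -> simplex v -> exists j, n%:R^-1 <= v ord0 j.
Proof.
move=> n_gt0 [_ v_sum].
have [j _ j_max] := arg_maxP (fun j => v ord0 j) (i0 := Ordinal n_gt0) (P := predT) isT.
exists j; rewrite -[_^-1]mul1r ler_pdivrMr ?ltr0n // mulr_natr.
rewrite -[in X in _ *+ X](card_ord n) -sumr_const -v_sum.
by apply: ler_sum => l _; exact: j_max.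
Qed.

Lemma simplex_const : (0 < n)%N -> simplex (const_mx n%:R^-1).
Proof.
move=> n_gt0; split=> [j|]; first by rewrite mxE invr_ge0 ler0n.
under eq_bigr do rewrite mxE.
by rewrite sumr_const card_ord -[_^-1 *+ n]mulr_natr mulVf // pnatr_eq0 -lt0n.
Qed.

Lemma simplex_closed : closed simplex.
Proof.
have -> : simplex = [set v : 'rV[R]_n | forall j, 0 <= v ord0 j] `&`
    ((fun v => \sum_j v ord0 j) @^-1` [set 1]).
  by apply/seteqP; split => v [].
apply: closedI; first by apply: closed_forall_ge0 => j; exact: coord_continuous.
apply: preimage_closed; last exact: closed_eq.
by move=> v _; apply: lipschitz_continuous; exact: sum_coord_lipschitz.
Qed.

Lemma simplex_compact : compact simplex.
Proof.
apply: (subclosed_compact simplex_closed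
  (rV_compact (fun=> @segment_compact R 0 1))).
move=> v v_simplex i /=; rewrite in_itv /= simplex_coord_le1 // andbT.
by case: v_simplex.
Qed.

End RowVectors.

Section Cooperative.
Context {R : realType} {n : nat}.
Implicit Types (v w : 'rV[R]_n).

Record homogeneous_cooperative (K : R) (F : 'rV[R]_n -> 'rV[R]_n) : Prop := {
  hc_lipschitz : forall v w, `|F v - F w| <= K * `|v - w|;
  hc_homogeneous : forall (t : R) v, 0 < t -> F (t *: v) = t *: F v;
  hc_cooperative : forall v (i k : 'I_n) (t : R), k != i -> 0 < t ->
    F v ord0 i < F (v + t *: delta_mx 0 k) ord0 i }.

Lemma homogeneous_cooperative_opp K F : homogeneous_cooperative K F ->
  homogeneous_cooperative K (fun v => - F (- v)).
Proof.
case=> FL FH FC; split=> [v w | t v t0 | v i k t ki t0].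
- by rewrite -opprD normrN (le_trans (FL _ _)) // -opprD normrN.
- by rewrite -scalerN FH // scalerN.
- rewrite !mxE ltrN2; have := FC (- (v + t *: delta_mx 0 k)) i k t ki t0.
  by rewrite opprD addrNK.
Qed.

Variables (K : R) (F : 'rV[R]_n -> 'rV[R]_n).
Hypothesis hF : homogeneous_cooperative K F.

Lemma hc_map0 : F 0 = 0.
Proof.
have := hc_homogeneous hF 0 (ltr0Sn R 1); rewrite scaler0 => F0.
apply/rowP => j; have := congr1 (fun M : 'rV[R]_n => M ord0 j) F0.
rewrite /= !mxE => F0j; lra.
Qed.

Lemma hc_coord_le v i : `|F v ord0 i| <= K * `|v|.
Proof.
have := hc_lipschitz hF v 0; rewrite hc_map0 !subr0; apply: le_trans.
exact: normr_coord_le.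
Qed.

Lemma hc_delta_ge v j (t : R) : 0 <= t ->
  F v ord0 j - K * t <= F (v + t *: delta_mx 0 j) ord0 j.
Proof.
move=> t0; have := hc_lipschitz hF v (v + t *: delta_mx 0 j).
rewrite opprD addNKr normrN normr_delta // => Flip.
have := le_trans (normr_coord_le _ j) Flip; rewrite !mxE ler_norml => /andP[_].
by rewrite lerBlDr -lerBlDl.
Qed.

Lemma hc_le_delta v (i k : 'I_n) (t : R) : k != i -> 0 <= t ->
  F v ord0 i <= F (v + t *: delta_mx 0 k) ord0 i.
Proof.
move=> ki; rewrite le_eqVlt => /orP[/eqP <-|t0]; first by rewrite scale0r addr0.
exact/ltW/(hc_cooperative hF).
Qed.

Lemma hc_mono v (d : 'rV[R]_n) i : (forall j, 0 <= d ord0 j) -> d ord0 i = 0 ->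
  F v ord0 i <= F (v + d) ord0 i.
Proof.
move=> d_ge0 di0; rewrite [d]row_sum_delta.
elim: (index_enum _) => [|k s IH]; first by rewrite big_nil addr0.
rewrite big_cons (addrC (_ *: _)) addrA; apply: le_trans IH _.
have [->|ki] := eqVneq k i; first by rewrite di0 scale0r addr0.
exact: hc_le_delta.
Qed.

Lemma hc_gt0_off_support v j k : (forall l, 0 <= v ord0 l) ->
  0 < v ord0 j -> v ord0 k = 0 -> 0 < F v ord0 k.
Proof.
move=> v_ge0 vj_gt0 vk0.
have jk : j != k by apply: contraTneq vj_gt0 => ->; rewrite vk0 ltxx.
pose e : 'rV[R]_n := v ord0 j *: delta_mx 0 j.
have Fe_gt0 : 0 < F e ord0 k.
  by have := hc_cooperative hF 0 jk vj_gt0; rewrite add0r hc_map0 mxE.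
have -> : v = e + (v - e) by rewrite addrC subrK.
apply: lt_le_trans Fe_gt0 (hc_mono _ _ _) => [l|]; rewrite !mxE eqxx /=.
  by case: eqP => [->|_]; rewrite ?mulr1 ?subrr // mulr0 subr0.
by rewrite eq_sym (negbTE jk) mulr0 subr0.
Qed.

Hypothesis n_gt0 : (0 < n)%N.

Lemma hc_compare v w : vlt 0 v -> vlt 0 w ->
  exists i (t : R), 0 < t /\ F v ord0 i <= t * F w ord0 i.
Proof.
move=> /vlt0P v_gt0 /vlt0P w_gt0.
have [i _ i_max] :=
  arg_maxP (fun j => v ord0 j / w ord0 j) (i0 := Ordinal n_gt0) (P := predT) isT.
set t := v ord0 i / w ord0 i.
have t_gt0 : 0 < t by rewrite divr_gt0.
exists i, t; split => //.
have -> : t * F w ord0 i = F (t *: w) ord0 i by rewrite (hc_homogeneous hF) // mxE.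
rewrite -[t *: w](addrNK v) addrC.
apply: hc_mono => [j|]; rewrite !mxE.
  by rewrite subr_ge0 -ler_pdivrMr //; exact: i_max.
by rewrite /t divfK ?subrr // gt_eqF.
Qed.

Lemma hc_pos_nonpos v w : vlt 0 v -> vlt 0 w -> vlt 0 (F v) -> ~ vle (F w) 0.
Proof.
move=> v_gt0 w_gt0 /vlt0P Fv_gt0 Fw_le0.
have [i [t [t_gt0 Fvw]]] := hc_compare v_gt0 w_gt0.
have := Fw_le0 i; rewrite mxE => Fwi_le0.
have := le_trans Fvw (mulr_ge0_le0 (ltW t_gt0) Fwi_le0).
by rewrite leNgt Fv_gt0.
Qed.

Lemma hc_nonneg_neg v w : vlt 0 v -> vlt 0 w -> vle 0 (F v) -> ~ vlt (F w) 0.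
Proof.
move=> v_gt0 w_gt0 Fv_ge0 Fw_lt0.
have [i [t [t_gt0 Fvw]]] := hc_compare v_gt0 w_gt0.
have := Fw_lt0 i; have := Fv_ge0 i; rewrite !mxE => Fvi_ge0 Fwi_lt0.
have : t * F w ord0 i < 0 by rewrite pmulr_rlt0.
move/(le_lt_trans Fvw).
by rewrite ltNge Fvi_ge0.
Qed.

Lemma hc_lipschitz_ge0 : 0 <= K.
Proof.
have := hc_lipschitz hF (1 *: delta_mx 0 (Ordinal n_gt0)) 0.
by rewrite !subr0 normr_delta // mulr1; exact: le_trans.
Qed.

Definition subeigen (r : R) : set 'rV[R]_n :=
  [set v | simplex v /\ forall j, r * v ord0 j <= F v ord0 j].

Lemma subeigen_antitone r s : r <= s -> subeigen s `<=` subeigen r.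
Proof.
move=> rs v [v_simplex v_sub]; split=> // j; apply: le_trans (v_sub j).
by have [v_ge0 _] := v_simplex; exact: ler_wpM2r.
Qed.

Lemma subeigen_closed r : closed (subeigen r).
Proof.
have -> : subeigen r =
    simplex `&` [set v | forall j, 0 <= F v ord0 j - r * v ord0 j].
  by apply/seteqP; split=> v [v_simplex v_sub]; split=> // j;
    have := v_sub j; rewrite subr_ge0.
apply: closedI simplex_closed _; apply: closed_forall_ge0 => j.
apply: (@lipschitz_continuous _ _ _ _ (K + `|r|)) => v w.
have -> : F v ord0 j - r * v ord0 j - (F w ord0 j - r * w ord0 j) =
    (F v - F w) ord0 j - r * (v - w) ord0 j by rewrite !mxE; ring.
rewrite mulrDl; apply: le_trans (ler_normB _ _) _; rewrite normrM; apply: lerD.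
  exact: le_trans (normr_coord_le _ _) (hc_lipschitz hF v w).
exact: ler_wpM2l (normr_coord_le _ _).
Qed.

Lemma subeigen_const : subeigen (- (K * n%:R)) (const_mx n%:R^-1).
Proof.
have c_simplex := simplex_const n_gt0; split=> // j.
rewrite mxE mulNr -mulrA mulfV ?pnatr_eq0 -?lt0n // mulr1.
have := hc_coord_le (const_mx n%:R^-1) j; rewrite ler_norml => /andP[Fc_ge _].
apply: le_trans Fc_ge; rewrite lerN2.
by rewrite ler_piMr ?hc_lipschitz_ge0 ?simplex_norm_le1.
Qed.

Lemma subeigen_ub r : subeigen r !=set0 -> r <= K * n%:R.
Proof.
move=> [v [v_simplex v_sub]]; have K_ge0 := hc_lipschitz_ge0.
have [r_le0|r_gt0] := leP r 0; first by rewrite (le_trans r_le0) ?mulr_ge0.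
have [j vj_ge] := simplex_coord_ge n_gt0 v_simplex.
have : r * n%:R^-1 <= K.
  apply: le_trans (ler_wpM2l (ltW r_gt0) vj_ge) _; apply: le_trans (v_sub j) _.
  apply: le_trans (ler_norm _) _; apply: le_trans (hc_coord_le v j) _.
  by rewrite ler_piMr ?simplex_norm_le1.
by rewrite ler_pdivrMr ?ltr0n.
Qed.

Lemma has_sup_subeigen : has_sup [set r | subeigen r !=set0].
Proof.
split; first by exists (- (K * n%:R)), (const_mx n%:R^-1); exact: subeigen_const.
by exists (K * n%:R) => r; exact: subeigen_ub.
Qed.

Definition collatz_wielandt : R := sup [set r | subeigen r !=set0].

(* Near-maximisers cluster in the compact simplex, and the closed sets
   [subeigen r], r < rho, all catch the cluster point. *)
Lemma collatz_wielandt_attained : subeigen collatz_wielandt !=set0.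
Proof.
have below r : r < collatz_wielandt -> subeigen r !=set0.
  rewrite -subr_gt0 => r_lt.
  have [s [v v_sub] r_s] := sup_adherent r_lt has_sup_subeigen.
  exists v; apply: subeigen_antitone v_sub; apply: ltW.
  by move: r_s; rewrite -/collatz_wielandt opprB addrCA subrr addr0.
have /choice[vs vs_sub] : forall r, exists v, r < collatz_wielandt -> subeigen r v.
  move=> r; have [/below [v v_sub]|_] := ltP r collatz_wielandt.
    by exists v.
  by exists 0.
have [p [_ p_cluster]] : simplex `&` cluster (vs @ collatz_wielandt^'-) !=set0.
  by apply: simplex_compact; apply: filterS (nbhs_left_lt _) => r /vs_sub[].
have p_sub r : r < collatz_wielandt -> subeigen r p.
  move=> r_lt; apply: subeigen_closed; rewrite clusterE in p_cluster.
  apply: p_cluster; apply: filterS (filterI (nbhs_left_gt r_lt) (nbhs_left_lt _)).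
  by move=> s [/ltW r_s /vs_sub]; exact: subeigen_antitone.
have [p_simplex _] : subeigen (collatz_wielandt - 1) p.
  by apply: p_sub; rewrite ltrBlDr ltrDl.
exists p; split=> // j; apply/ler_addgt0Pr => e e_gt0.
have [_ /(_ j) pj_sub] : subeigen (collatz_wielandt - e) p.
  by apply: p_sub; rewrite ltrBlDr ltrDl.
have pj_le1 := simplex_coord_le1 j p_simplex.
have [p_ge0 _] := p_simplex; have := p_ge0 j.
nra.
Qed.

Lemma subeigen_strict v r : (forall j, 0 <= v ord0 j) -> 0 < \sum_j v ord0 j ->
  (forall j, r * v ord0 j < F v ord0 j) -> exists2 s, r < s & subeigen s !=set0.
Proof.
move=> v_ge0; set c := \sum_j v ord0 j => c_gt0 v_strict.
have [eta eta_gt0 eta_le] :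
    exists2 eta, 0 < eta & forall j, eta <= F v ord0 j - r * v ord0 j.
  apply: (@finite_pos_lb _ _ (fun j => F v ord0 j - r * v ord0 j)) => j.
  by rewrite subr_gt0.
exists (r + eta / c); first by rewrite ltrDl divr_gt0.
exists (c^-1 *: v); split.
  split=> [j|]; first by rewrite mxE mulr_ge0 ?invr_ge0 ?(ltW c_gt0).
  by under eq_bigr do rewrite mxE; rewrite -mulr_sumr mulVf ?gt_eqF.
move=> j; rewrite (hc_homogeneous hF) ?invr_gt0 // !mxE mulrCA.
rewrite ler_wpM2l ?invr_ge0 ?(ltW c_gt0) // mulrDl -lerBrDl.
apply: le_trans (eta_le j); rewrite mulrAC ler_pdivrMr // ler_wpM2l ?(ltW eta_gt0) //.
exact: coord_le_sum.
Qed.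

Lemma collatz_wielandt_eigen p :
  subeigen collatz_wielandt p -> F p = collatz_wielandt *: p.
Proof.
case=> -[p_ge0 p_sum] p_sub; apply/rowP => j; rewrite mxE.
apply/eqP; rewrite eq_le p_sub andbT leNgt; apply/negP => gap.
(* Pushing p along e_j keeps coordinate j strict and, by cooperativity, makes
   every other coordinate strict: rho could then be increased. *)
set rho := collatz_wielandt in p_sub gap *.
pose C := K + `|rho| + 1.
have C_gt0 : 0 < C by rewrite ltr_wpDl ?addr_ge0 ?hc_lipschitz_ge0.
pose eps := (F p ord0 j - rho * p ord0 j) / C.
have eps_gt0 : 0 < eps by rewrite divr_gt0 ?subr_gt0.
pose q := p + eps *: delta_mx 0 j.
have q_ge0 i : 0 <= q ord0 i.
  by rewrite !mxE; apply: addr_ge0 => //; apply: mulr_ge0; rewrite ?ler0n ?ltW.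
have [s rho_s s_sub] : exists2 s, rho < s & subeigen s !=set0.
  apply: (@subeigen_strict q) => // [|i].
    apply: lt_le_trans (coord_le_sum j q_ge0).
    by rewrite !mxE !eqxx mulr1 ltr_pwDr.
  have [->|ij] := eqVneq i j.
    apply: lt_le_trans (hc_delta_ge p j (ltW eps_gt0)).
    rewrite !mxE !eqxx mulr1 mulrDr.
    suff : (K + rho) * eps < F p ord0 j - rho * p ord0 j by rewrite mulrDl; lra.
    rewrite -[ltRHS](divfK (lt0r_neq0 C_gt0)) -/eps mulrC ltr_pM2l //.
    by rewrite /C -addrA ltrD2l (le_lt_trans (ler_norm rho)) // ltrDl.
  have ji : j != i by rewrite eq_sym.
  apply: le_lt_trans (hc_cooperative hF p ji eps_gt0).
  by rewrite !mxE (negbTE ij) mulr0 addr0.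
by have := sup_upper_bound has_sup_subeigen s_sub; rewrite leNgt rho_s.
Qed.

Theorem hc_eigenvector : exists v (r : R), vlt 0 v /\ F v = r *: v.
Proof.
have [p p_sub] := collatz_wielandt_attained.
have Fp := collatz_wielandt_eigen p_sub.
have [p_simplex _] := p_sub; have [p_ge0 _] := p_simplex.
exists p, collatz_wielandt; split => //; apply/vlt0P => k.
rewrite lt_def p_ge0 andbT; apply/eqP => pk0.
have [j pj_ge] := simplex_coord_ge n_gt0 p_simplex.
have pj_gt0 : 0 < p ord0 j by apply: lt_le_trans pj_ge; rewrite invr_gt0 ltr0n.
by have := hc_gt0_off_support p_ge0 pj_gt0 pk0; rewrite Fp mxE pk0 mulr0 ltxx.
Qed.

End Cooperative.

Section Trichotomy.
Context {R : realType} {n : nat} (K : R) (D : 'rV[R]_n -> 'rV[R]_n).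
Hypotheses (n_gt0 : (0 < n)%N) (hD : homogeneous_cooperative K D).
Hypothesis D_opp : forall v i, D (- v) ord0 i <= - D v ord0 i.

Lemma hc_neg_nonpos_pos v w : vlt v 0 -> vlt w 0 -> vle (D v) 0 -> ~ vlt 0 (D w).
Proof.
move=> v_lt0 w_lt0 Dv_le0 Dw_gt0.
have hG := homogeneous_cooperative_opp hD.
apply: (hc_nonneg_neg hG n_gt0 (vlt0N v_lt0) (vlt0N w_lt0)) => i /=;
  rewrite opprK !mxE.
- by have := Dv_le0 i; rewrite mxE oppr_ge0.
- by have := Dw_gt0 i; rewrite mxE oppr_lt0.
Qed.

Lemma hc_sign_patterns :
  (exists v w, [/\ vlt 0 v, vlt w 0, vlt 0 (D v) & vlt (D w) 0]) \/
  (exists v w, [/\ vlt 0 v, vlt w 0, vle (D v) 0 & vle (D w) 0]) \/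
  (exists v w, [/\ vlt 0 v, vlt w 0, vlt (D v) 0 & vlt 0 (D w)]).
Proof.
have [v [r [/vlt0P v_gt0 Dv]]] := hc_eigenvector hD n_gt0.
have [w [s [/vlt0P w_gt0 Gw]]] :=
  hc_eigenvector (homogeneous_cooperative_opp hD) n_gt0.
have Dw i : D (- w) ord0 i = - (s * w ord0 i).
  have := congr1 (fun x : 'rV[R]_n => x ord0 i) Gw.
  by rewrite !mxE => <-; rewrite opprK.
have Dvi i : D v ord0 i = r * v ord0 i by rewrite Dv mxE.
have [r_gt0|r_le0] := ltP 0 r.
  left; exists v, (- v); split=> i; rewrite ?mxE ?oppr_lt0 ?oppr_gt0 ?Dvi //.
  - by rewrite mulr_gt0.
  - by apply: le_lt_trans (D_opp v i) _; rewrite Dvi oppr_lt0 mulr_gt0.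
have [s_lt0|s_ge0] := ltP s 0.
  right; right; exists w, (- w); split=> i; rewrite ?mxE ?oppr_lt0 ?oppr_gt0 ?Dw //.
  - have := D_opp (- w) i; rewrite opprK Dw opprK => /le_lt_trans; apply.
    by rewrite nmulr_rlt0 ?w_gt0.
  - by rewrite oppr_gt0 nmulr_rlt0 ?w_gt0.
right; left; exists v, (- w); split=> i; rewrite ?mxE ?oppr_lt0 ?Dvi ?Dw //.
- exact: mulr_le0_ge0 r_le0 (ltW (v_gt0 i)).
- by rewrite oppr_le0; exact: mulr_ge0 s_ge0 (ltW (w_gt0 i)).
Qed.

Theorem hc_trichotomy :
  let P1 := exists v w, [/\ vlt 0 v, vlt w 0, vlt 0 (D v) & vlt (D w) 0] in
  let P2 := exists v w, [/\ vlt 0 v, vlt w 0, vle (D v) 0 & vle (D w) 0] in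
  let P3 := exists v w, [/\ vlt 0 v, vlt w 0, vlt (D v) 0 & vlt 0 (D w)] in
  (P1 /\ ~ P2 /\ ~ P3) \/ (~ P1 /\ P2 /\ ~ P3) \/ (~ P1 /\ ~ P2 /\ P3).
Proof.
move=> P1 P2 P3.
have vltW (x : 'rV[R]_n) : vlt x 0 -> vle x 0 by move=> x_lt0 i; exact/ltW.
have not12 : P1 -> ~ P2.
  by move=> [v1 [_ [v1_gt0 _ Dv1 _]]] [v2 [_ [v2_gt0 _ Dv2 _]]];
    exact: (hc_pos_nonpos hD n_gt0 v1_gt0 v2_gt0 Dv1 Dv2).
have not13 : P1 -> ~ P3.
  by move=> [v1 [_ [v1_gt0 _ Dv1 _]]] [v2 [_ [v2_gt0 _ /vltW Dv2 _]]];
    exact: (hc_pos_nonpos hD n_gt0 v1_gt0 v2_gt0 Dv1 Dv2).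
have not23 : P2 -> ~ P3.
  by move=> [_ [w1 [_ w1_lt0 _ Dw1]]] [_ [w2 [_ w2_lt0 _ Dw2]]];
    exact: (hc_neg_nonpos_pos w1_lt0 w2_lt0 Dw1 Dw2).
have := hc_sign_patterns; tauto.
Qed.

End Trichotomy.

Section DirectionalDerivative.
Context {R : realType} {n : nat} (u : 'rV[R]_n -> 'rV[R]_n) (a : 'rV[R]_n).
Hypothesis hu : utility u.
Variable L : R.
Hypothesis L_gt0 : 0 < L.
Hypothesis ball_cube : forall v, `|v| <= L -> cube (a + v).
Implicit Types (v w : 'rV[R]_n).

Lemma cube_segment v (l : R) : 0 <= l -> l * `|v| <= L -> cube (a + l *: v).
Proof. by move=> l_ge0 lv; apply: ball_cube; rewrite normrZ ger0_norm. Qed.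

Lemma cube_a : cube a.
Proof. by rewrite -[a]addr0; apply: ball_cube; rewrite normr0 ltW. Qed.

Lemma u_ge0_le1 x i : cube x -> 0 <= u x ord0 i <= 1.
Proof.
case: hu => u_cube _ _ _ /u_cube[u_ge0 u_le1].
by have := u_ge0 i; have := u_le1 i; rewrite !mxE => -> ->.
Qed.

Definition diffq v i (l : R) := l^-1 * (u (a + l *: v) ord0 i - u a ord0 i).

Lemma diffq_nonincr v i (s t : R) : 0 < s -> s <= t -> t * `|v| <= L ->
  diffq v i t <= diffq v i s.
Proof.
move=> s_gt0 st tv; have t_gt0 := lt_le_trans s_gt0 st.
have cube_t := cube_segment (ltW t_gt0) tv.
have st01 : 0 <= s / t <= 1.
  by apply/andP; split; [rewrite divr_ge0 ?ltW | rewrite ler_pdivrMr // mul1r].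
case: hu => _ _ u_conc _; have := u_conc _ _ _ cube_t cube_a st01 i.
have -> : s / t *: (a + t *: v) + (1 - s / t) *: a = a + s *: v.
  by apply/rowP => j; rewrite !mxE; field; rewrite gt_eqF.
rewrite /diffq; have -> : t^-1 * (u (a + t *: v) ord0 i - u a ord0 i) =
    s^-1 * (s / t * (u (a + t *: v) ord0 i - u a ord0 i)).
  by field; rewrite !gt_eqF.
move=> conc; rewrite ler_wpM2l ?invr_ge0 ?(ltW s_gt0) //; lra.
Qed.

Lemma diffq_ge v i (t : R) : 0 < t -> t * `|v| <= L -> - t^-1 <= diffq v i t.
Proof.
move=> t_gt0 tv; have /andP[ut_ge0 _] := u_ge0_le1 i (cube_segment (ltW t_gt0) tv).
have /andP[_ ua_le1] := u_ge0_le1 i cube_a.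
rewrite /diffq -mulrN1 ler_wpM2l ?invr_ge0 ?(ltW t_gt0) //; lra.
Qed.

Lemma diffq_opp v i (s : R) : 0 < s -> s * `|v| <= L ->
  diffq v i s + diffq (- v) i s <= 0.
Proof.
move=> s_gt0 sv; have cube_p := cube_segment (ltW s_gt0) sv.
have cube_m : cube (a + s *: - v) by apply: cube_segment (ltW s_gt0) _; rewrite normrN.
have half01 : 0 <= (2^-1 : R) <= 1 by rewrite invr_ge0 ler0n /= invf_le1 // ler1n.
case: hu => _ _ u_conc _; have := u_conc _ _ _ cube_p cube_m half01 i.
have -> : 2^-1 *: (a + s *: v) + (1 - 2^-1) *: (a + s *: - v) = a.
  by apply/rowP => j; rewrite !mxE; field.
move=> conc; rewrite /diffq -mulrDr mulr_ge0_le0 ?invr_ge0 ?(ltW s_gt0) //; lra.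
Qed.

Lemma diffq_midpoint v w i (s : R) : 0 < s -> s * `|v| <= L -> s * `|w| <= L ->
  2^-1 * diffq v i s + 2^-1 * diffq w i s <= diffq (2^-1 *: (v + w)) i s.
Proof.
move=> s_gt0 sv sw.
have half01 : 0 <= (2^-1 : R) <= 1 by rewrite invr_ge0 ler0n /= invf_le1 // ler1n.
case: hu => _ _ u_conc _.
have := u_conc _ _ _ (cube_segment (ltW s_gt0) sv) (cube_segment (ltW s_gt0) sw) half01 i.
have -> : 2^-1 *: (a + s *: v) + (1 - 2^-1) *: (a + s *: w) =
    a + s *: (2^-1 *: (v + w)) by apply/rowP => j; rewrite !mxE; field.
rewrite /diffq; set x := u (a + s *: v) ord0 i; set y := u (a + s *: w) ord0 i.
have -> : 2^-1 * (s^-1 * (x - u a ord0 i)) + 2^-1 * (s^-1 * (y - u a ord0 i)) =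
    s^-1 * (2^-1 * x + (1 - 2^-1) * y - u a ord0 i) by field; rewrite gt_eqF.
move=> conc; rewrite ler_wpM2l ?invr_ge0 ?(ltW s_gt0) //; lra.
Qed.

Lemma diffq_scale v i (c l : R) : 0 < c -> l != 0 ->
  diffq (c *: v) i l = c * diffq v i (c * l).
Proof.
move=> c_gt0 l_neq0; rewrite /diffq scalerA [l * c]mulrC invfM.
by field; rewrite l_neq0 gt_eqF.
Qed.

Definition radius v : R := L / (`|v| + 1).

Lemma radius_gt0 v : 0 < radius v.
Proof. by rewrite divr_gt0 // ltr_wpDl. Qed.

Lemma radius_le v (s : R) : s <= radius v -> s * `|v| <= L.
Proof.
move=> s_le; apply: le_trans (ler_wpM2r (normr_ge0 v) s_le) _.
by rewrite /radius mulrAC ler_pdivrMr ?ltr_wpDl // ler_wpM2l ?ltW // ltrDl.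
Qed.

Lemma near_radius v : \forall s \near 0^'+, 0 < s /\ s * `|v| <= L.
Proof.
near=> s; split; first by near: s; exact: nbhs_right_gt.
by apply: radius_le; apply: ltW; near: s; exact: nbhs_right_lt (radius_gt0 v).
Unshelve. all: by end_near.
Qed.

(* The quotient increases as the step x shrinks and stays bounded, since
   diffq v x <= - diffq (-v) x <= - diffq (-v) (radius v) <= (radius v)^-1. *)
Lemma diffq_cvg v i : cvg (diffq v i x @[x --> 0^'+]).
Proof.
apply/cvg_ex; eexists.
apply: (@nonincreasing_at_right_cvgr _ _ _ (BLeft (radius v))).
- by rewrite bnd_simp radius_gt0.
- move=> x y; rewrite !in_itv /= => /andP[x_gt0 _] /andP[_ y_lt] xy.
  by apply: diffq_nonincr => //; apply/radius_le/ltW.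
- exists (radius v)^-1 => _ [x /andP[x_gt0 x_lt] <-].
  have xv := radius_le (ltW x_lt); have rv := radius_le (lexx (radius v)).
  rewrite -normrN in rv.
  have := diffq_opp i x_gt0 xv; have := diffq_nonincr i x_gt0 (ltW x_lt) rv.
  have := diffq_ge i (radius_gt0 v) rv; lra.
Qed.

Definition dderiv v i := lim (diffq v i x @[x --> 0^'+]).

Lemma diffq_le_dderiv v i (t : R) : 0 < t -> t * `|v| <= L ->
  diffq v i t <= dderiv v i.
Proof.
move=> t_gt0 tv; apply: limr_ge; first exact: diffq_cvg.
near=> s; apply: diffq_nonincr tv; first by near: s; exact: nbhs_right_gt.
by apply: ltW; near: s; exact: nbhs_right_lt.
Unshelve. all: by end_near.
Qed.

Lemma dderivZ v i (c : R) : 0 < c -> dderiv (c *: v) i = c * dderiv v i.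
Proof.
move=> c_gt0; apply: cvg_lim; first exact: norm_hausdorff.
have scaled : (fun l => c * diffq v i (c * l)) @ 0^'+ --> c * dderiv v i.
  apply: cvgMr; have := @increasing_cvg_at_right_comp R (fun l => c * l) (diffq v i) 0
    (BInfty _ false) (dderiv v i); apply => //.
  - by move=> x y _ _ xy; rewrite ltr_pM2l.
  - by apply: cvg_at_right_filter; apply: cvgMr; exact: cvg_id.
  - by rewrite mulr0; exact: diffq_cvg.
apply: cvg_trans scaled; apply: near_eq_cvg; near=> l.
by rewrite diffq_scale // gt_eqF //; near: l; exact: nbhs_right_gt.
Unshelve. all: by end_near.
Qed.

Lemma dderiv_midpoint v w i :
  2^-1 * dderiv v i + 2^-1 * dderiv w i <= dderiv (2^-1 *: (v + w)) i.
Proof.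
have mid : (fun s => 2^-1 * diffq v i s + 2^-1 * diffq w i s) @ 0^'+
    --> 2^-1 * dderiv v i + 2^-1 * dderiv w i.
  by apply: cvgD; apply: cvgMr; exact: diffq_cvg.
rewrite -(cvg_lim (@norm_hausdorff _ _) mid); apply: ler_lim.
- by apply/cvg_ex; eexists; exact: mid.
- exact: diffq_cvg.
near=> s; have [s_gt0 sv] : 0 < s /\ s * `|v| <= L by near: s; exact: near_radius.
have [_ sw] : 0 < s /\ s * `|w| <= L by near: s; exact: near_radius.
exact: diffq_midpoint.
Unshelve. all: by end_near.
Qed.

Lemma dderivD_ge v w i : dderiv v i + dderiv w i <= dderiv (v + w) i.
Proof.
have -> : v + w = 2 *: (2^-1 *: (v + w)) by rewrite scalerA mulfV ?scale1r.
by rewrite dderivZ //; have := dderiv_midpoint v w i; lra.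
Qed.

Lemma dderiv0 i : dderiv 0 i = 0.
Proof. by have := dderivZ 0 i (ltr0Sn R 1); rewrite scaler0 => /eqP; lra. Qed.

Lemma dderiv_delta_gt0 (k i : 'I_n) : k != i -> 0 < dderiv (delta_mx 0 k) i.
Proof.
move=> ki; have e_norm : `|delta_mx 0 k : 'rV[R]_n| = 1.
  by rewrite -[delta_mx _ _]scale1r normr_delta.
apply: lt_le_trans (diffq_le_dderiv i L_gt0 _); last by rewrite e_norm mulr1.
rewrite /diffq mulr_gt0 ?invr_gt0 // subr_gt0; case: hu => _ _ _; apply.
- by apply: cube_segment (ltW L_gt0) _; rewrite e_norm mulr1.
- exact: cube_a.
- split=> [j|]; first by rewrite !mxE lerDl; apply: mulr_ge0; rewrite ?ler0n ?ltW.
  by exists k; rewrite !mxE !eqxx mulr1 ltrDl.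
- by rewrite !mxE (eq_sym i k) (negbTE ki) andbF mulr0 addr0.
Qed.

Lemma dderiv_ge d i : - (L^-1 * `|d|) <= dderiv d i.
Proof.
have [->|d_neq0] := eqVneq d 0; first by rewrite normr0 mulr0 oppr0 dderiv0.
have d_gt0 : 0 < `|d| by rewrite normr_gt0.
have t_gt0 : 0 < L / `|d| by rewrite divr_gt0.
have td : L / `|d| * `|d| <= L by rewrite divfK ?gt_eqF.
apply: le_trans (diffq_le_dderiv i t_gt0 td); apply: le_trans (diffq_ge i t_gt0 td).
by rewrite invf_div mulrC.
Qed.

Lemma dderiv_lipschitz v w i : `|dderiv v i - dderiv w i| <= L^-1 * `|v - w|.
Proof.
rewrite ler_norml; apply/andP; split.
  have := dderivD_ge w (v - w) i; rewrite (addrC w) subrK.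
  have := dderiv_ge (v - w) i; lra.
have := dderivD_ge v (w - v) i; rewrite (addrC v) subrK.
have := dderiv_ge (w - v) i; rewrite distrC; lra.
Qed.

Definition dderiv_vec v : 'rV[R]_n := \row_i dderiv v i.

Lemma dderiv_vec_dirderiv v : dirderiv_is u a v (dderiv_vec v).
Proof.
apply/cvgrPdist_le => e e_gt0.
have coord i : \forall l \near 0^'+, `|dderiv v i - diffq v i l| <= e.
  by move: e e_gt0; apply/cvgrPdist_le; exact: diffq_cvg.
near=> l; have coord_l : forall i, `|dderiv v i - diffq v i l| <= e.
  by near: l; exact: filter_forall coord.
by apply: normr_row_le (ltW e_gt0) _ => i; rewrite !mxE; exact: coord_l.
Unshelve. all: by end_near.
Qed.

Lemma dirderiv_dderiv_vec v d : dirderiv_is u a v d -> d = dderiv_vec v.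
Proof.
move=> vd; rewrite -(cvg_lim (@norm_hausdorff _ _) vd).
exact: (cvg_lim (@norm_hausdorff _ _) (@dderiv_vec_dirderiv v)).
Qed.

Lemma dderiv_vec_hc : homogeneous_cooperative L^-1 dderiv_vec.
Proof.
split=> [v w | t v t_gt0 | v i k t ki t_gt0].
- have Linv_ge0 : 0 <= L^-1 by rewrite invr_ge0 ltW.
  apply: normr_row_le => [|i]; first exact: mulr_ge0.
  by rewrite !mxE; exact: dderiv_lipschitz.
- by apply/rowP => i; rewrite !mxE dderivZ.
- rewrite !mxE; apply: lt_le_trans (dderivD_ge v (t *: delta_mx 0 k) i).
  by rewrite dderivZ // ltrDl mulr_gt0 ?dderiv_delta_gt0.
Qed.

Lemma dderiv_vec_opp v i : dderiv_vec (- v) ord0 i <= - dderiv_vec v ord0 i.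
Proof.
by rewrite !mxE; have := dderivD_ge v (- v) i; rewrite subrr dderiv0; lra.
Qed.

Lemma dirderiv_signs (P Q : 'rV[R]_n -> Prop) :
  (exists vup vdown du dd, [/\ vlt 0 vup /\ vlt vdown 0,
     dirderiv_is u a vup du, dirderiv_is u a vdown dd, P du & Q dd]) =
  (exists v w, [/\ vlt 0 v, vlt w 0, P (dderiv_vec v) & Q (dderiv_vec w)]).
Proof.
apply/propext; split.
  move=> [v [w [_ [_ [[v_gt0 w_lt0] /dirderiv_dderiv_vec-> /dirderiv_dderiv_vec->]]]]].
  by exists v, w.
move=> [v [w [v_gt0 w_lt0 Pv Qw]]].
exists v, w, (dderiv_vec v), (dderiv_vec w).
by split=> //; exact: dderiv_vec_dirderiv.
Qed.

End DirectionalDerivative.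

Lemma cube_ball {R : realType} {n : nat} (a : 'rV[R]_n) :
  vlt 0 a -> vlt a (const_mx 1) ->
  exists2 L : R, 0 < L & forall v, `|v| <= L -> cube (a + v).
Proof.
move=> /vlt0P a_gt0 a_lt1.
have [L L_gt0 L_le] :
    exists2 L : R, 0 < L & forall i, L <= Order.min (a ord0 i) (1 - a ord0 i).
  by apply: finite_pos_lb => i; have := a_lt1 i; rewrite mxE lt_min a_gt0 subr_gt0.
exists L => // v vL.
have vi i : - L <= v ord0 i <= L.
  by rewrite -ler_norml; exact: le_trans (normr_coord_le v i) vL.
split=> i; rewrite !mxE; have /andP[vi_ge vi_le] := vi i;
  have := L_le i; rewrite le_min => /andP[La L1a]; lra.
Qed.

Theorem lemma3 (R : realType) (n : nat) (u : 'rV[R]_n -> 'rV[R]_n)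
  (hn : (0 < n)%N) (hu : utility u) (a : 'rV[R]_n)
  (ha0 : vlt 0 a) (ha1 : vlt a (const_mx 1)) :
  let C1 := exists vup vdown du dd, [/\ vlt 0 vup /\ vlt vdown 0,
              dirderiv_is u a vup du, dirderiv_is u a vdown dd,
              vlt 0 du & vlt dd 0] in
  let C2 := exists vup vdown du dd, [/\ vlt 0 vup /\ vlt vdown 0,
              dirderiv_is u a vup du, dirderiv_is u a vdown dd,
              vle du 0 & vle dd 0] in
  let C3 := exists vup vdown du dd, [/\ vlt 0 vup /\ vlt vdown 0,
              dirderiv_is u a vup du, dirderiv_is u a vdown dd,
              vlt du 0 & vlt 0 dd] in
  (C1 /\ ~ C2 /\ ~ C3) \/ (~ C1 /\ C2 /\ ~ C3) \/ (~ C1 /\ ~ C2 /\ C3).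
Proof.
have [L L_gt0 a_ball] := cube_ball ha0 ha1.
rewrite /= !(dirderiv_signs hu L_gt0 a_ball).
have D_hc := dderiv_vec_hc hu L_gt0 a_ball.
exact: hc_trichotomy hn D_hc (dderiv_vec_opp hu L_gt0 a_ball).
Qed.
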